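(* For every integer $N\ge 3$, the graph $G_N=K_2\cup (N-2)K_1$ satisfies $|V(G_N)|=N$, $\Delta(G_N)=1<N-1$, and $\hat r_\infty(G_N)=1$. Consequently, there is an infinite family of graphs $G_N$ with $|V(G_N)|=N$, $\Delta(G_N)<N-1$ and $\hat r_\infty(G_N)=1$ for every $N$; and for every fixed $c>1$ there is a family of graphs $G_N$ with $|V(G_N)|=N$ and $\Delta(G_N)<c$ such that $\hat r_\infty(G_N)$ does not tend to $0$ as $N\to\infty$.
   Context: All graphs are finite and simple; a graph is nonempty if it has at least one edge. $G\cup H$ is disjoint union, $sK_1$ is the edgeless graph on $s$ vertices, $tK_2$ is a matching with $t$ edges, $\Delta$ is maximum degree. For graphs $F,G,H$, $F\to(G,H)$ means every red--blue coloring of $E(F)$ contains a red copy of $G$ or a blue copy of $H$, and $\hat r(G,H)=\min\{|E(F)|:F\to(G,H)\}$. For a nonempty graph $G$, $\hat r_\infty(G)=\lim_{t\to\infty}\frac{\hat r(tK_2,G)}{t\,|E(G)|}$ (this limit exists). *)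

From Stdlib Require Import Reals ClassicalEpsilon.
From mathcomp Require Import all_boot.


(* The raw relation [radj] is
   arbitrary; the actual adjacency [adj] is its symmetric, loopless part, so
   every record denotes a simple graph and every simple graph arises. *)
Record graph := Graph { nv : nat; radj : rel 'I_nv }.

Definition adj (G : graph) : rel 'I_(nv G) :=
  fun x y => (x != y) && (radj G x y || radj G y x).

Definition edges (G : graph) : {set {set 'I_(nv G)}} :=
  [set [set x; y] | x in 'I_(nv G), y in 'I_(nv G) & adj G x y].

Definition nedges (G : graph) : nat := #|edges G|.

Definition deg (G : graph) (v : 'I_(nv G)) : nat := #|[set u | adj G v u]|.

(* maximum degree Delta(G) (0 for the graph with no vertices) *)
Definition maxdeg (G : graph) : nat := \max_(v : 'I_(nv G)) deg G v.

Definition mono_copy (F G : graph) (c : {set 'I_(nv F)} -> bool) (b : bool)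
  (f : 'I_(nv G) -> 'I_(nv F)) : Prop :=
  injective f /\
  forall x y, adj G x y -> adj F (f x) (f y) /\ c [set f x; f y] = b.

(* F -> (G, H): every red-blue colouring (red = true, blue = false) of E(F)
   has a red copy of G or a blue copy of H. *)
Definition arrows (F G H : graph) : Prop :=
  forall c : {set 'I_(nv F)} -> bool,
    (exists f, mono_copy F G c true f) \/
    (exists f, mono_copy F H c false f).

Definition sr_attained (G H : graph) (m : nat) : Prop :=
  exists F : graph, arrows F G H /\ nedges F = m.

Definition is_size_ramsey (G H : graph) (m : nat) : Prop :=
  sr_attained G H m /\ forall k, sr_attained G H k -> m <= k.

(* hat r(G,H) = min { |E(F)| : F -> (G,H) }  (the minimum exists by Ramsey's
   theorem; the default 0 is never used). *)
Definition hat_r (G H : graph) : nat :=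
  match excluded_middle_informative (exists m, is_size_ramsey G H m) with
  | left h => proj1_sig (constructive_indefinite_description _ h)
  | right _ => 0
  end.

(* t K_2 : vertices 0..2t-1, edges {2i, 2i+1} *)
Definition matching (t : nat) : graph :=
  Graph (2 * t) (fun x y => (val x %/ 2 == val y %/ 2)).

(* K_2 u (N-2) K_1 : vertices 0..N-1, single edge {0,1} *)
Definition GN (N : nat) : graph :=
  Graph N (fun x y => (val x == 0) && (val y == 1)).

Definition rinf_seq (G : graph) (t : nat) : R :=
  Rdiv (INR (hat_r (matching t) G)) (INR (t * nedges G)).

Definition rinf_is (G : graph) (l : R) : Prop := Un_cv (rinf_seq G) l.

From Stdlib Require Import Reals Lia ClassicalEpsilon.
From mathcomp Require Import all_boot zify.

Set Implicit Arguments.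
Unset Strict Implicit.
Unset Printing Implicit Defensive.

(* Colouring every edge of F red shows that any F -> (G, K_2 u (N-2) K_1)
   contains a copy of G, hence has at least e(G) edges.  Conversely, G plus N
   isolated vertices already arrows: either every edge is red, or some edge
   is blue and, together with N - 2 of the isolated vertices, forms a blue
   K_2 u (N-2) K_1.  So hat r(G, G_N) = e(G) for N >= 2; for G = tK_2 the
   ratio defining hat r_infty(G_N) is identically 1. *)

Lemma adjC (G : graph) : symmetric (adj G).
Proof. by move=> x y; rewrite /adj eq_sym orbC. Qed.

Lemma leq_nedges_embedding (F G : graph) (f : 'I_(nv G) -> 'I_(nv F)) :
  injective f -> {homo f : x y / adj G x y >-> adj F x y} ->
  nedges G <= nedges F.
Proof.
move=> finj fhom; rewrite /nedges -(card_imset _ (imset_inj finj)).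
apply/subset_leq_card/subsetP => _ /imsetP [_ /imset2P [x y _ + ->] ->].
rewrite inE imsetU1 imset_set1 => /fhom hxy.
by apply/imset2P; exists (f x) (f y); rewrite ?inE.
Qed.

Lemma arrows_nedges_leq (F G H : graph) :
  0 < nedges H -> arrows F G H -> nedges G <= nedges F.
Proof.
move=> /card_gt0P [_ /imset2P [x y _ + _]]; rewrite inE => hxy.
case/(_ (fun _ => true)) => [[f [finj fhom]] | [f [_ /(_ x y hxy) [_ //]]]].
exact: leq_nedges_embedding finj (fun u v huv => (fhom u v huv).1).
Qed.

Lemma size_ramsey_hat_r (G H : graph) (m : nat) :
  is_size_ramsey G H m -> hat_r G H = m.
Proof.
move=> hm; rewrite /hat_r; case: excluded_middle_informative => [h|[]]; last by exists m.
case: (constructive_indefinite_description _ h) => k [hk1 hk2] /=.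
by apply/eqP; rewrite eqn_leq (hk2 m hm.1) (hm.2 k hk1).
Qed.

Lemma split_lshift (m n : nat) (a : 'I_m) : split (lshift n a) = inl a.
Proof. exact: unsplitK (inl a). Qed.

Lemma split_rshift (m n : nat) (k : 'I_n) : split (rshift m k) = inr k.
Proof. exact: unsplitK (inr k). Qed.

Section AddIsolated.

Variables (G : graph) (n : nat).

Definition add_isolated : graph :=
  Graph (nv G + n)
    (fun x y => if (split x, split y) is (inl a, inl b) then radj G a b else false).

Lemma adj_add_isolated_lshift (a b : 'I_(nv G)) :
  adj add_isolated (lshift n a) (lshift n b) = adj G a b.
Proof. by rewrite /adj /= eq_lshift !split_lshift. Qed.

Lemma adj_add_isolated_inv (x y : 'I_(nv add_isolated)) :
  adj add_isolated x y ->
  exists a b, [/\ x = lshift n a, y = lshift n b & adj G a b].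
Proof.
rewrite -[x]splitK -[y]splitK.
case: (split x) => [a|k]; case: (split y) => [b|l] hxy.
- by exists a, b; rewrite -adj_add_isolated_lshift.
- all: by move: hxy; rewrite /adj /= ?split_lshift ?split_rshift andbF.
Qed.

Lemma edges_add_isolated :
  edges add_isolated = [set lshift n @: e | e : {set _} in edges G].
Proof.
apply/setP => s; apply/imset2P/imsetP.
- move=> [x y _]; rewrite inE => /adj_add_isolated_inv [a [b [-> -> hab]]] ->.
  exists [set a; b]; last by rewrite imsetU1 imset_set1.
  by apply/imset2P; exists a b; rewrite ?inE.
- move=> [_ /imset2P [a b _ + ->] ->]; rewrite inE => hab.
  exists (lshift n a) (lshift n b); rewrite ?inE ?adj_add_isolated_lshift //.
  by rewrite imsetU1 imset_set1.
Qed.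

Lemma nedges_add_isolated : nedges add_isolated = nedges G.
Proof.
by rewrite /nedges edges_add_isolated card_imset //; apply/imset_inj/lshift_inj.
Qed.

End AddIsolated.

Lemma adj_GN (N : nat) (x y : 'I_(nv (GN N))) :
  adj (GN N) x y =
    ((x == 0 :> nat) && (y == 1 :> nat)) || ((x == 1 :> nat) && (y == 0 :> nat)).
Proof.
rewrite /adj /= -val_eqE /=.
by case: x => [[|[|x]] hx]; case: y => [[|[|y]] hy]; rewrite /= ?andbF ?orbF.
Qed.

Section ArrowsGN.

Variables (G : graph) (N : nat) (c : {set 'I_(nv (add_isolated G N))} -> bool).

Lemma red_copy_add_isolated :
  (forall x y, adj (add_isolated G N) x y -> c [set x; y]) ->
  mono_copy (add_isolated G N) G c true (lshift N).
Proof.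
move=> red; split=> [|a b hab]; first exact: lshift_inj.
have hab' : adj (add_isolated G N) (lshift N a) (lshift N b)
  by rewrite adj_add_isolated_lshift.
by split; last apply: red.
Qed.

(* The two ends of the blue edge take the roles of 0 and 1; every other
   vertex k of G_N goes to the k-th added isolated vertex. *)
Lemma blue_copy_GN (x y : 'I_(nv (add_isolated G N))) :
  adj (add_isolated G N) x y -> c [set x; y] = false ->
  exists f, mono_copy (add_isolated G N) (GN N) c false f.
Proof.
move=> hxy blue; have [a [b [hx hy _]]] := adj_add_isolated_inv hxy.
pose f (k : 'I_(nv (GN N))) : 'I_(nv (add_isolated G N)) :=
  if k == 0 :> nat then x else if k == 1 :> nat then y else rshift (nv G) k.
have fE k : (f k : nat) =
    if k == 0 :> nat then a : nat else if k == 1 :> nat then b : nat else nv G + k.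
  by rewrite /f hx hy; case: ifP => //; case: ifP.
have hab : (a : nat) <> b by move: hxy; rewrite hx hy /adj -val_eqE => /andP [/eqP].
exists f; split.
- move=> k l /(congr1 val); rewrite /= !fE => e; apply: val_inj; move: e.
  by have := ltn_ord a; have := ltn_ord b; case: k l => [[|[|k]] ?] [[|[|l]] ?] /=; lia.
- move=> k l; rewrite adj_GN => /orP [] /andP [/eqP k0 /eqP l1];
    rewrite /f k0 l1 /=; first by [].
  by rewrite adjC setUC.
Qed.

End ArrowsGN.

Lemma arrows_add_isolated_GN (G : graph) (N : nat) :
  arrows (add_isolated G N) G (GN N).
Proof.
move=> c.
case: (boolP [exists x, exists y, adj (add_isolated G N) x y && ~~ c [set x; y]]).
- move=> /existsP [x /existsP [y /andP [hxy /negbTE blue]]].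
  by right; apply: blue_copy_GN hxy blue.
- rewrite negb_exists => /forallP red; left; exists (lshift N).
  apply: red_copy_add_isolated => x y hxy.
  by move: (red x); rewrite negb_exists => /forallP /(_ y); rewrite hxy negbK.
Qed.

Lemma edges_GN (N : nat) (hN : 1 < N) :
  edges (GN N) = [set [set Ordinal (ltnW hN); Ordinal hN]].
Proof.
apply/setP => s; rewrite inE; apply/imset2P/eqP.
- move=> [x y _]; rewrite inE adj_GN => /orP [] /andP [/eqP hx /eqP hy] ->.
  + by congr [set _; _]; apply: val_inj.
  + by rewrite setUC; congr [set _; _]; apply: val_inj.
- by move=> ->; exists (Ordinal (ltnW hN)) (Ordinal hN); rewrite ?inE ?adj_GN.
Qed.

Lemma nedges_GN (N : nat) : 2 <= N -> nedges (GN N) = 1.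
Proof. by move=> hN; rewrite /nedges (edges_GN hN) cards1. Qed.

Lemma maxdeg_GN (N : nat) : 2 <= N -> maxdeg (GN N) = 1.
Proof.
move=> hN; apply/eqP; rewrite eqn_leq; apply/andP; split.
- apply/bigmax_leqP => v _; apply/card_le1_eqP => u1 u2; rewrite /deg.
  by rewrite !inE !adj_GN => hu1 hu2; apply: ord_inj; lia.
- apply: (leq_trans _ (leq_bigmax (Ordinal (ltnW hN)))).
  by apply/card_gt0P; exists (Ordinal hN); rewrite inE adj_GN.
Qed.

Lemma hat_r_GN (G : graph) (N : nat) : 2 <= N -> hat_r G (GN N) = nedges G.
Proof.
move=> hN; apply: size_ramsey_hat_r; split.
- exists (add_isolated G N).
  by split; [apply: arrows_add_isolated_GN | apply: nedges_add_isolated].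
- by move=> k [F [hF <-]]; apply: arrows_nedges_leq hF; rewrite nedges_GN.
Qed.

Section Matching.

Variable t : nat.

Lemma adj_matching (x y : 'I_(nv (matching t))) :
  adj (matching t) x y = (x != y) && (x %/ 2 == y %/ 2).
Proof. by rewrite /adj /= [y %/ 2 == _]eq_sym orbb. Qed.

Lemma double_ord_lt (i : 'I_t) : 2 * i < nv (matching t).
Proof. by have := ltn_ord i; rewrite /=; lia. Qed.

Lemma double_ord_succ_lt (i : 'I_t) : (2 * i).+1 < nv (matching t).
Proof. by have := ltn_ord i; rewrite /=; lia. Qed.

Definition matching_edge (i : 'I_t) : {set 'I_(nv (matching t))} :=
  [set Ordinal (double_ord_lt i); Ordinal (double_ord_succ_lt i)].

Lemma matching_edge_inj : injective matching_edge.
Proof.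
move=> i j /setP /(_ (Ordinal (double_ord_lt i))).
rewrite !inE eqxx -!val_eqE /= => /esym /orP [] /eqP h; apply: ord_inj; lia.
Qed.

Lemma edges_matching : edges (matching t) = [set matching_edge i | i in 'I_t].
Proof.
apply/setP => s; apply/imset2P/imsetP.
- move=> [x y _]; rewrite inE adj_matching -val_eqE /= => /andP [hxy /eqP hd] ->.
  have hi : x %/ 2 < t by have := ltn_ord x; rewrite /=; lia.
  exists (Ordinal hi) => //; apply/setP => z; rewrite !inE -!val_eqE /=.
  by apply/idP/idP => /orP [] /eqP ->; apply/orP; lia.
- move=> [i _ ->].
  exists (Ordinal (double_ord_lt i)) (Ordinal (double_ord_succ_lt i)) => //.
  by rewrite inE adj_matching -val_eqE /=; lia.
Qed.

Lemma nedges_matching : nedges (matching t) = t.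
Proof.
by rewrite /nedges edges_matching card_imset ?card_ord //; apply: matching_edge_inj.
Qed.

End Matching.

Lemma Un_cv_eventually_const (u : nat -> R) (l : R) (M : nat) :
  (forall n, M <= n -> u n = l) -> Un_cv u l.
Proof. by move=> ul eps heps; exists M => n /leP hn; rewrite ul // R_dist_eq. Qed.

Lemma const_not_cv0 (l : R) : l <> R0 -> ~ Un_cv (fun _ => l) R0.
Proof.
by move=> hl /(UL_sequence _ _ _ (Un_cv_eventually_const (M := 0) (fun n _ => erefl l))).
Qed.

Lemma rinf_GN (N : nat) : 2 <= N -> rinf_is (GN N) R1.
Proof.
move=> hN; apply: (Un_cv_eventually_const (M := 1)) => t ht.
rewrite /rinf_seq hat_r_GN // nedges_matching nedges_GN // muln1.
by apply: Rinv_r; apply: not_0_INR; lia.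
Qed.

Theorem corollary2p7 :
  (forall N : nat, 3 <= N ->
     nv (GN N) = N /\ maxdeg (GN N) = 1 /\ 1 < N - 1 /\ 0 < nedges (GN N) /\
     rinf_is (GN N) R1)
  /\
  (exists Gf : nat -> graph, forall N : nat, 3 <= N ->
     nv (Gf N) = N /\ maxdeg (Gf N) < N - 1 /\ 0 < nedges (Gf N) /\
     rinf_is (Gf N) R1)
  /\
  (forall c : R, Rlt R1 c ->
     exists (Gf : nat -> graph) (rf : nat -> R),
       (forall N : nat, 3 <= N ->
          nv (Gf N) = N /\ Rlt (INR (maxdeg (Gf N))) c /\
          0 < nedges (Gf N) /\ rinf_is (Gf N) (rf N)) /\
       ~ Un_cv rf R0).
Proof.
have GN_facts N : 3 <= N ->
    [/\ maxdeg (GN N) = 1, nedges (GN N) = 1 & rinf_is (GN N) R1].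
  by move=> hN; split; [apply: maxdeg_GN | apply: nedges_GN | apply: rinf_GN]; lia.
split; [|split].
- by move=> N /[dup] hN /GN_facts [-> -> ?]; repeat split => //; lia.
- by exists GN => N /[dup] hN /GN_facts [-> -> ?]; repeat split => //; lia.
- move=> c hc; exists GN, (fun _ => R1); split; last exact: const_not_cv0 R1_neq_R0.
  by move=> N /GN_facts [-> -> ?].
Qed.
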